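(* Let $\Gamma$ be a totally ordered set, $\sigma:\Gamma\to\Gamma$ an order-preserving embedding with $\sigma(\gamma)<\gamma$ for all $\gamma\in\Gamma$, and $(\mathbf k,\log)$ an ordered field with surjective logarithm. Let $G=\Gamma^{\mathbf k}$ with prelogarithmic section $l_\sigma$, and consider the EL-series field $\mathbf k((\Gamma^{\mathbf k}))^{\sigma EL}$ with logarithm $\mathrm{Log}_\sigma$. Then for every $n\ge0$ and every $g\in G^{\#n}$ with $g>1$ we have $v(\mathrm{Log}_\sigma(g))<g$, where $v$ is the canonical valuation on $\mathbf k((G^{\#(n+1)}))$.
   Context: Let $\mathbf k$ be an ordered field and $(G,\cdot,<)$ a totally ordered abelian group. $\mathbf k((G))$ denotes the field of generalized power series $\alpha=\sum_{g\in G}\alpha(g)\,g$ with anti-well-ordered support, usual operations, canonical valuation $v(\alpha)=\max\operatorname{supp}\alpha$ and ordering $\alpha>0$ iff $\alpha(v(\alpha))>0$. $\mathbf k((S))=\{\alpha:\operatorname{supp}\alpha\subseteq S\}$, $G^{>1}=\{g>1\}$. Hahn group: $\Gamma^{\mathbf k}$ is the set of formal products $g=\prod_{\gamma\in\Gamma}x_\gamma^{g(\gamma)}$, $g(\gamma)\in\mathbf k$, with anti-well-ordered support $\{\gamma:g(\gamma)\ne0\}\subseteq\Gamma$, multiplied pointwise, ordered by $g>1$ iff $g(\gamma)>0$ for $\gamma=\max\operatorname{supp}g$. The prelogarithmic section $l_\sigma:\Gamma^{\mathbf k}\to\mathbf k((G^{>1}))$ is $l_\sigma(\prod x_\gamma^{g(\gamma)})=\sum_\gamma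 g(\gamma)\,x_{\sigma(\gamma)}$ (here $x_{\sigma(\gamma)}\in\Gamma^{\mathbf k}$ is a monomial). A prelogarithmic section is an order-preserving group embedding $l:(G,\cdot)\to(\mathbf k((G^{>1})),+)$. Exponential extension: $G^\#$ is the ordered abelian group of formal symbols $e(\alpha)$, $\alpha\in\mathbf k((G^{>1}))$, with $e(\alpha)e(\beta)=e(\alpha+\beta)$, $e(\alpha)<e(\beta)\iff\alpha<\beta$, and $e(l(g))$ identified with $g\in G$; $l^\#(e(\alpha))=\alpha$ is a prelogarithmic section extending $l$. Iterating gives $G^{\#n}$, $l^{\#n}$; the EL-series field $\mathbf k((G))^{EL}=\bigcup_n\mathbf k((G^{\#n}))$ has logarithm $\mathrm{Log}$ given on $G^{\#n}$ by $l^{\#n}$ (and in general by $\mathrm{Log}(g\,a(1+\varepsilon))=l^{\#n}(g)+\log a+\sum_{i\ge1}(-1)^{i-1}\varepsilon^i/i$). For $(G,l)=(\Gamma^{\mathbf k},l_\sigma)$ this field is denoted $\mathbf k((\Gamma^{\mathbf k}))^{\sigma EL}$ and its logarithm $\mathrm{Log}_\sigma$. *)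

From HB Require Import structures.
From mathcomp Require Import all_boot all_order all_algebra.
From Stdlib Require Import ClassicalEpsilon.
Set Implicit Arguments. Unset Strict Implicit. Unset Printing Implicit Defensive.
Import Order.TTheory GRing.Theory Num.Theory.
Local Open Scope ring_scope.

Section Defs.
Variable k : realFieldType.

Definition anti_wo (T : Type) (lt : T -> T -> Prop) (S : T -> Prop) : Prop :=
  forall A : T -> Prop, (forall x, A x -> S x) -> (exists x, A x) ->
    exists m, A m /\ forall y, A y -> ~ lt m y.

Definition supp (T : Type) (f : T -> k) : T -> Prop := fun g => f g <> 0.

(* Order on generalized power series / Hahn group elements (functions with
   anti-well-ordered support): a < b iff the coefficient of b - a at the
   maximum of its support is positive. *)
Definition ser_lt (T : Type) (lt : T -> T -> Prop) (a b : T -> k) : Prop :=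
  exists m, a m < b m /\ forall h, lt m h -> a h = b h.

(* canonical valuation v(a) = max supp a (d is an arbitrary default, used
   only when a = 0) *)
Definition ser_val (T : Type) (lt : T -> T -> Prop) (d : T) (a : T -> k) : T :=
  epsilon (inhabits d) (fun m => a m <> 0 /\ forall h, a h <> 0 -> ~ lt m h).

(* An ordered group G (carrier [car], strict order [ltc], unit [onec], the
   subset [memc] of elements of the carrier that belong to G) together with a
   prelogarithmic section [lc] : G -> k((G^{>1})) (series as coefficient
   functions car -> k). *)
Record PLG := {
  car : Type;
  ltc : car -> car -> Prop;
  onec : car;
  memc : car -> Prop;
  lc : car -> (car -> k) }.
Arguments ltc : clear implicits.
Arguments onec : clear implicits.
Arguments memc : clear implicits.
Arguments lc : clear implicits.

(* The Hahn group Gamma^k: g = prod x_gamma^{g(gamma)} represented by its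
   exponent function g : Gamma -> k with anti-well-ordered support. *)
Definition monom (d : Order.disp_t) (Γ : orderType d) (δ : Γ) : Γ -> k :=
  fun γ => if γ == δ then 1 else 0.

(* l_sigma (prod x_gamma^{g(gamma)}) = sum_gamma g(gamma) x_{sigma(gamma)} *)
Definition l_sigma (d : Order.disp_t) (Γ : orderType d) (σ : Γ -> Γ)
    (g : Γ -> k) : (Γ -> k) -> k := fun h =>
  match excluded_middle_informative (exists γ, h = monom (σ γ)) with
  | left H => g (proj1_sig (constructive_indefinite_description _ H))
  | right _ => 0
  end.

Definition hahn_base (d : Order.disp_t) (Γ : orderType d) (σ : Γ -> Γ) : PLG :=
  {| car := Γ -> k;
     ltc := ser_lt (fun x y : Γ => (x < y)%O);
     onec := fun _ => 0;
     memc := fun g => anti_wo (fun x y : Γ => (x < y)%O) (supp g);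
     lc := l_sigma σ |}.

(* G^# = { e(alpha) : alpha in k((G^{>1})) },
   with e(alpha) represented by alpha itself; the ordering is that of
   k((G^{>1})); g in G is identified with e(l(g)) = l(g).
   l^#(e(alpha)) = alpha, viewed in k((G^{#>1})) via G ⊆ G^#, i.e. the
   pushforward of alpha along the identification g |-> l(g). *)
Definition push (P : PLG) (f : car P -> k) : (car P -> k) -> k := fun h =>
  match excluded_middle_informative (exists g : car P, memc P g /\ lc P g = h) with
  | left H => f (proj1_sig (constructive_indefinite_description _ H))
  | right _ => 0
  end.

Definition sharp (P : PLG) : PLG :=
  {| car := car P -> k;
     ltc := ser_lt (ltc P);
     onec := fun _ => 0;
     memc := fun f => anti_wo (ltc P) (supp f) /\
                      (forall h, supp f h -> memc P h /\ ltc P (onec P) h);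
     lc := @push P |}.

Fixpoint tower (P : PLG) (n : nat) : PLG :=
  match n with 0 => P | S m => sharp (tower P m) end.

Definition is_log (log : k -> k) : Prop :=
  (forall x y, 0 < x -> 0 < y -> log (x * y) = log x + log y) /\
  (forall x y, 0 < x -> x < y -> log x < log y).

End Defs.

Arguments ltc {k} p _ _.
Arguments onec {k} p.
Arguments memc {k} p _.
Arguments lc {k} p _ _.

From HB Require Import structures.
From mathcomp Require Import all_boot all_order all_algebra.
From Stdlib Require Import ClassicalEpsilon FunctionalExtensionality.
Set Implicit Arguments. Unset Strict Implicit. Unset Printing Implicit Defensive.
Import Order.TTheory GRing.Theory Num.Theory.
Local Open Scope ring_scope.

(* Theorem 13: in the iterated exponential extensions G^{#n} of the Hahn group
   G = Γ^k with prelogarithmic section l_σ, every g > 1 satisfies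
   v(l^{#n}(g)) < g.

   The proof is an induction on n, carried by the invariant [good_plg]: the
   order of G is strict and total, 1 ∈ G, l maps G injectively and strictly
   increasingly into k((G^{>1})), l(1) = 0, and v(l(g)) < g for every g > 1.
   Both Γ^k and G^# are groups of series T -> k (with T = Γ, resp. T = G)
   whose section l is the pushforward of coefficients along an
   order-reflecting map j : T -> k((T)): j(γ) = x_{σ(γ)} for Γ^k, and
   j(g) = l(g) for G^#.  The core lemma [good_of_pushforward] establishes the
   invariant for any such group, provided every j(x) is positive and is
   supported strictly below x.  For G^# this last condition is exactly the
   inductive hypothesis v(l(g)) < g; for Γ^k it is σ(γ) < γ. *)

Record strict_total_on (T : Type) (lt : T -> T -> Prop) (M : T -> Prop) : Prop := {
  sto_irrefl : forall x, M x -> ~ lt x x;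
  sto_trans : forall x y z, M x -> M y -> M z -> lt x y -> lt y z -> lt x z;
  sto_total : forall x y, M x -> M y -> x = y \/ lt x y \/ lt y x }.

Lemma strict_total_on_sub (T : Type) (lt : T -> T -> Prop) (M N : T -> Prop) :
  strict_total_on lt M -> (forall x, N x -> M x) -> strict_total_on lt N.
Proof.
move=> hM NM; split.
- by move=> x /NM; exact: (sto_irrefl hM).
- by move=> x y z /NM Mx /NM My /NM Mz; exact: (sto_trans hM Mx My Mz).
- by move=> x y /NM Mx /NM My; exact: (sto_total hM).
Qed.

Lemma order_strict_total (d : Order.disp_t) (T : orderType d) :
  strict_total_on (fun x y : T => (x < y)%O) (fun _ => True).
Proof.
split=> [x _|x y z _ _ _|x y _ _]; first by rewrite ltxx.
- exact: lt_trans.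
- case: (ltgtP x y) => [l|l|e]; by [right; left|right; right|left].
Qed.

Lemma strict_mono_reflect (T U : Type) (ltT : T -> T -> Prop) (ltU : U -> U -> Prop)
    (MT : T -> Prop) (MU : U -> Prop) (j : T -> U) :
  strict_total_on ltT MT -> strict_total_on ltU MU -> (forall x, MT x -> MU (j x)) ->
  (forall x y, MT x -> MT y -> ltT x y -> ltU (j x) (j y)) ->
  forall x y, MT x -> MT y -> ltU (j x) (j y) -> ltT x y.
Proof.
move=> hT hU jM jmono x y Mx My lxy.
case: (sto_total hT Mx My) => [exy|[//|lyx]]; exfalso.
- by subst y; exact: (sto_irrefl hU (jM x Mx) lxy).
- apply: (sto_irrefl hU (jM x Mx)).
  exact: (sto_trans hU (jM x Mx) (jM y My) (jM x Mx) lxy (jmono y x My Mx lyx)).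
Qed.

Section AntiWellOrder.
Variables (T : Type) (lt : T -> T -> Prop).

Lemma anti_wo_sub (S D : T -> Prop) :
  anti_wo lt S -> (forall x, D x -> S x) -> anti_wo lt D.
Proof. by move=> wS sub A hA; apply: wS => x /hA /sub. Qed.

(* A union of two anti-well-ordered subsets of a total order is
   anti-well-ordered: compare the maxima of the two parts. *)
Lemma anti_wo_union (M S1 S2 : T -> Prop) :
  strict_total_on lt M -> (forall x, S1 x -> M x) -> (forall x, S2 x -> M x) ->
  anti_wo lt S1 -> anti_wo lt S2 -> anti_wo lt (fun x => S1 x \/ S2 x).
Proof.
move=> hM sub1 sub2 w1 w2 A hA [a Aa].
have [[b [Ab S1b]]|no1] := classic (exists x, A x /\ S1 x); last first.
  apply: w2 (ex_intro _ a Aa) => x Ax.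
  by case: (hA x Ax) => // S1x; case: no1; exists x.
have [[c [Ac S2c]]|no2] := classic (exists x, A x /\ S2 x); last first.
  apply: w1 (ex_intro _ a Aa) => x Ax.
  by case: (hA x Ax) => // S2x; case: no2; exists x.
have [u [[Au S1u] hu]] :=
  w1 (fun x => A x /\ S1 x) (fun x hx => proj2 hx) (ex_intro _ b (conj Ab S1b)).
have [v [[Av S2v] hv]] :=
  w2 (fun x => A x /\ S2 x) (fun x hx => proj2 hx) (ex_intro _ c (conj Ac S2c)).
have [Mu Mv] := (sub1 u S1u, sub2 v S2v).
case: (sto_total hM Mu Mv) => [uv|[luv|lvu]]; first subst v.
- by exists u; split=> // y Ay; case: (hA y Ay) => Sy; [apply: hu | apply: hv].
- exists v; split=> // y Ay; case: (hA y Ay) => Sy; last exact: hv.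
  by move=> lvy; apply: (hu y (conj Ay Sy)); exact: (sto_trans hM Mu Mv (sub1 y Sy) luv lvy).
- exists u; split=> // y Ay; case: (hA y Ay) => Sy; first exact: hu.
  by move=> luy; apply: (hv y (conj Ay Sy)); exact: (sto_trans hM Mv Mu (sub2 y Sy) lvu luy).
Qed.

End AntiWellOrder.

Section SeriesOrder.
Variables (k : realFieldType) (T : Type) (lt : T -> T -> Prop) (M : T -> Prop).

Definition series_on (f : T -> k) : Prop :=
  anti_wo lt (supp f) /\ forall x, supp f x -> M x.

Lemma diff_in_dom (f g : T -> k) x :
  (forall y, supp f y -> M y) -> (forall y, supp g y -> M y) -> f x <> g x -> M x.
Proof.
move=> sf sg fg; case: (eqVneq (f x) 0) => [fx0|/eqP fx0]; last exact: sf.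
by apply: sg => gx0; apply: fg; rewrite fx0 gx0.
Qed.

Hypothesis hM : strict_total_on lt M.

Lemma ser_eq_above (f g : T -> k) m m' :
  (forall y, supp f y -> M y) -> (forall y, supp g y -> M y) -> M m -> M m' ->
  (forall x, lt m x -> f x = g x) -> lt m m' -> forall x, lt m' x -> f x = g x.
Proof.
move=> sf sg Mm Mm' above lmm' x lx; apply: NNPP => fg.
have Mx := diff_in_dom sf sg fg.
by apply: fg; apply: above; exact: (sto_trans hM Mm Mm' Mx lmm' lx).
Qed.

(* transitivity: compare at the larger of the two witnesses *)
Lemma ser_lt_trans (f g h : T -> k) : series_on f -> series_on g -> series_on h ->
  ser_lt lt f g -> ser_lt lt g h -> ser_lt lt f h.
Proof.
move=> [_ sf] [_ sg] [_ sh] [m1 [l1 e1]] [m2 [l2 e2]].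
have M1 : M m1 by apply: (diff_in_dom sf sg) => e; rewrite e ltxx in l1.
have M2 : M m2 by apply: (diff_in_dom sg sh) => e; rewrite e ltxx in l2.
case: (sto_total hM M1 M2) => [e12|[l12|l21]].
- subst m2; exists m1; split; first exact: (lt_trans l1 l2).
  by move=> x hx; rewrite e1 // e2.
- exists m2; split; first by rewrite e1.
  by move=> x hx; rewrite (ser_eq_above sf sg M1 M2 e1 l12 hx) e2.
- exists m1; split; first by rewrite -e2.
  by move=> x hx; rewrite e1 // (ser_eq_above sg sh M2 M1 e2 l21 hx).
Qed.

(* totality: two distinct series are compared at the largest point where
   they differ, which exists since the union of their supports is
   anti-well-ordered *)
Lemma ser_lt_total (f g : T -> k) : series_on f -> series_on g ->
  f = g \/ ser_lt lt f g \/ ser_lt lt g f.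
Proof.
move=> [wf sf] [wg sg].
have [[x0 hx0]|nx] := classic (exists x, f x <> g x); last first.
  by left; apply: functional_extensionality => x; apply: NNPP => hx; apply: nx; exists x.
have wD : anti_wo lt (fun x => f x <> g x).
  apply: anti_wo_sub (anti_wo_union hM sf sg wf wg) _ => x hx.
  case: (eqVneq (f x) 0) => [fx0|/eqP fx0]; last by left.
  by right=> gx0; apply: hx; rewrite fx0 gx0.
have [m [Dm hm]] := wD _ (fun x h => h) (ex_intro _ x0 hx0).
have above x : lt m x -> f x = g x by move=> l; apply: NNPP => nx; exact: (hm x nx l).
right; case: (ltgtP (f m) (g m)) => [l|l|e]; last by [].
- by left; exists m.
- by right; exists m; split=> // x /above ->.
Qed.

Lemma ser_lt_strict_total : strict_total_on (ser_lt lt) series_on.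
Proof.
split; [|exact: ser_lt_trans|exact: ser_lt_total].
by move=> f _ [m [l _]]; rewrite ltxx in l.
Qed.

Lemma ser_lt_dominant (a b : T -> k) g0 : M g0 -> 0 < b g0 ->
  (forall h, lt g0 h -> b h = 0) -> (forall h, a h <> 0 -> M h /\ lt h g0) ->
  ser_lt lt a b.
Proof.
move=> Mg0 pos0 above0 below.
have a_above h : lt g0 h -> a h = 0.
  move=> l; apply: NNPP => /below [Mh l'].
  exact: (sto_irrefl hM Mh (sto_trans hM Mh Mg0 Mh l' l)).
have ag0 : a g0 = 0 by apply: NNPP => /below [_ /(sto_irrefl hM Mg0)].
exists g0; split; first by rewrite ag0.
by move=> h l; rewrite a_above // above0.
Qed.

End SeriesOrder.

Lemma ser_val_spec (k : realFieldType) (T : Type) (lt : T -> T -> Prop) (d : T)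
    (a : T -> k) :
  anti_wo lt (supp a) -> (exists x, a x <> 0) ->
  a (ser_val lt d a) <> 0 /\ forall h, a h <> 0 -> ~ lt (ser_val lt d a) h.
Proof.
move=> w [x hx]; rewrite /ser_val.
apply: (epsilon_spec (inhabits d) (fun m => a m <> 0 /\ forall h, a h <> 0 -> ~ lt m h)).
have [m [am hm]] : exists m, supp a m /\ forall y, supp a y -> ~ lt m y.
  by apply: w => [//|]; exists x.
by exists m.
Qed.

Record is_pushforward (k : realFieldType) (T U : Type) (M : T -> Prop) (j : T -> U)
    (F : (T -> k) -> U -> k) : Prop := {
  pf_at : forall a x, M x -> F a (j x) = a x;
  pf_supp : forall a u, F a u <> 0 -> exists x, M x /\ j x = u /\ a x <> 0 }.

Section Transport.
Variables (k : realFieldType) (T U : Type) (ltT : T -> T -> Prop) (ltU : U -> U -> Prop).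
Variables (M : T -> Prop) (j : T -> U) (F : (T -> k) -> U -> k).
Hypothesis pushF : is_pushforward M j F.

Lemma pushforward_inj (a b : T -> k) :
  (forall x, supp a x -> M x) -> (forall x, supp b x -> M x) -> F a = F b -> a = b.
Proof.
move=> sa sb e; apply: functional_extensionality => x.
case: (classic (M x)) => Mx; first by rewrite -(pf_at pushF a Mx) -(pf_at pushF b Mx) e.
have off (c : T -> k) : (forall y, supp c y -> M y) -> c x = 0.
  by move=> sc; apply: NNPP => /sc.
by rewrite (off a sa) (off b sb).
Qed.

Lemma pushforward0 : F (fun _ => 0) = (fun _ => 0).
Proof.
apply: functional_extensionality => u; apply: NNPP.
by case/(pf_supp pushF) => x [_ [_]].
Qed.

Hypothesis j_reflect : forall x y, M x -> M y -> ltU (j x) (j y) -> ltT x y.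

(* the maximum of a subset of supp (F a) is the image of the maximum of
   its preimage in supp a *)
Lemma pushforward_anti_wo (a : T -> k) : anti_wo ltT (supp a) -> anti_wo ltU (supp (F a)).
Proof.
move=> wa A hA [u0 Au0].
have [x0 [Mx0 [jx0 ax0]]] := pf_supp pushF (hA u0 Au0).
have [m [[Mm [am Am]] hm]] : exists m, (M m /\ a m <> 0 /\ A (j m)) /\
    forall y, (M y /\ a y <> 0 /\ A (j y)) -> ~ ltT m y.
  by apply: wa => [x [_ [ax _]] //|]; exists x0; rewrite jx0.
exists (j m); split=> // u Au lu.
have [x [Mx [jx ax]]] := pf_supp pushF (hA u Au); subst u.
by apply: (hm x (conj Mx (conj ax Au))); apply: j_reflect.
Qed.

(* F is strictly increasing: F a and F b first differ at j m, where a and b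
   first differ at m *)
Lemma pushforward_lt (a b : T -> k) :
  (forall x, supp a x -> M x) -> (forall x, supp b x -> M x) ->
  ser_lt ltT a b -> ser_lt ltU (F a) (F b).
Proof.
move=> sa sb [m [lm above]].
have Mm : M m by apply: (diff_in_dom sa sb) => e; rewrite e ltxx in lm.
exists (j m); split; first by rewrite !(pf_at pushF).
move=> u lu; case: (classic (exists x, M x /\ j x = u)) => [[x [Mx jx]]|nu].
- by subst u; rewrite !(pf_at pushF) // above //; apply: j_reflect.
- have off c : F c u = 0.
    by apply: NNPP => /(pf_supp pushF) [x [Mx [jx _]]]; apply: nu; exists x.
  by rewrite !off.
Qed.

End Transport.

(* The valuation of the pushforward of a positive series a is smaller than a
   as soon as each j x (x in the support of a) is supported strictly below x:
   v(F a) = j x for some x ≤ v(a). *)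
Lemma pushforward_val_lt (k : realFieldType) (T : Type) (lt : T -> T -> Prop)
    (M : T -> Prop) (j : T -> T -> k) (F : (T -> k) -> (T -> k) -> k) (d a : T -> k) :
  strict_total_on lt M -> is_pushforward M j F ->
  anti_wo (ser_lt lt) (supp (F a)) -> (forall x, supp a x -> M x) ->
  (forall x, supp a x -> forall y, supp (j x) y -> M y /\ lt y x) ->
  ser_lt lt (fun _ => 0) a -> ser_lt lt (ser_val (ser_lt lt) d (F a)) a.
Proof.
move=> hM pushF wFa sa below [g0 [pos0 above0]].
have ag0 : a g0 <> 0 by move=> e; rewrite e ltxx in pos0.
have Mg0 := sa g0 ag0.
have Fag0 : F a (j g0) <> 0 by rewrite (pf_at pushF a Mg0).
have [nz _] := ser_val_spec d wFa (ex_intro _ (j g0) Fag0).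
have [g [Mg [<- ag]]] := pf_supp pushF nz.
apply: (ser_lt_dominant hM Mg0 pos0) => [h l|h jgh]; first by rewrite -above0.
have [Mh lhg] := below g ag h jgh; split=> //.
case: (sto_total hM Mg Mg0) => [e|[lgg0|lg0g]]; first by subst g.
- exact: (sto_trans hM Mh Mg Mg0 lhg lgg0).
- by case: ag; rewrite -above0.
Qed.

Record good_plg (k : realFieldType) (P : PLG k) : Prop := {
  good_order : strict_total_on (ltc P) (memc P);
  good_one : memc P (onec P);
  good_lc_mem : forall g, memc P g -> memc (sharp P) (lc P g);
  good_lc_inj : forall g g', memc P g -> memc P g' -> lc P g = lc P g' -> g = g';
  good_lc_mono : forall g g', memc P g -> memc P g' -> ltc P g g' ->
    ltc (sharp P) (lc P g) (lc P g');
  good_lc_one : lc P (onec P) = (fun _ => 0);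
  good_val_lt : forall g, memc P g -> ltc P (onec P) g ->
    ltc P (ser_val (ltc P) (onec P) (lc P g)) g }.

Section PushforwardGroup.
Variables (k : realFieldType) (T : Type) (lt : T -> T -> Prop) (M D : T -> Prop).
Variables (memQ : (T -> k) -> Prop) (j : T -> T -> k) (F : (T -> k) -> (T -> k) -> k).
Hypothesis hM : strict_total_on lt M.
Hypothesis D_sub : forall x, D x -> M x.
Hypothesis memQ_iff : forall f, memQ f <-> anti_wo lt (supp f) /\ forall x, supp f x -> D x.
Hypothesis pushF : is_pushforward M j F.
Hypothesis j_reflect : forall x y, M x -> M y -> ser_lt lt (j x) (j y) -> lt x y.
Hypothesis j_pos : forall x, D x -> memQ (j x) /\ ser_lt lt (fun _ => 0) (j x).
Hypothesis j_below : forall x, D x -> forall y, supp (j x) y -> M y /\ lt y x.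

Lemma memQ_series (f : T -> k) : memQ f -> series_on lt M f.
Proof. by case/memQ_iff=> wf sf; split=> // x /sf /D_sub. Qed.

Lemma good_of_pushforward :
  good_plg {| car := T -> k; ltc := ser_lt lt; onec := fun _ => 0; memc := memQ; lc := F |}.
Proof.
split=> /=.
- exact: (strict_total_on_sub (ser_lt_strict_total k hM) memQ_series).
- by apply/memQ_iff; split=> [A hA [x /hA]|x /(_ erefl)].
- move=> f /memQ_iff [wf sf]; split; first exact: (pushforward_anti_wo pushF j_reflect wf).
  by move=> u /(pf_supp pushF) [x [_ [<- /sf Dx]]]; apply: j_pos.
- move=> f f' /memQ_series [_ sf] /memQ_series [_ sf'].
  exact: (pushforward_inj pushF sf sf').
- move=> f f' /memQ_series [_ sf] /memQ_series [_ sf'].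
  exact: (pushforward_lt pushF j_reflect sf sf').
- exact: (pushforward0 pushF).
- move=> f mf pos; have [wf sf] := proj1 (memQ_iff f) mf.
  apply: (pushforward_val_lt _ hM pushF _ (proj2 (memQ_series mf)) _ pos).
  + exact: (pushforward_anti_wo pushF j_reflect wf).
  + by move=> x /sf Dx; apply: j_below.
Qed.

End PushforwardGroup.

Section SharpExtension.
Variables (k : realFieldType) (P : PLG k).

Lemma push_is_pushforward :
  (forall g g', memc P g -> memc P g' -> lc P g = lc P g' -> g = g') ->
  is_pushforward (memc P) (lc P) (@push k P).
Proof.
move=> lc_inj; split=> [f g mg|f h]; rewrite /push; case: excluded_middle_informative.
- move=> H; case: (constructive_indefinite_description _ H) => g1 [mg1 e1] /=.
  by rewrite (lc_inj _ _ mg1 mg e1).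
- by move=> []; exists g.
- by move=> H; case: (constructive_indefinite_description _ H) => g1 [mg1 e1] /= ne; exists g1.
- by [].
Qed.

Hypothesis hP : good_plg P.

Lemma lc_reflect g g' : memc P g -> memc P g' ->
  ser_lt (ltc P) (lc P g) (lc P g') -> ltc P g g'.
Proof.
apply: (strict_mono_reflect (good_order hP) (ser_lt_strict_total k (good_order hP))).
- by move=> x /(good_lc_mem hP) [wx sx]; split=> // y /sx [].
- exact: (good_lc_mono hP).
Qed.

Lemma lc_pos g : memc P g -> ltc P (onec P) g -> ser_lt (ltc P) (fun _ => 0) (lc P g).
Proof.
by move=> mg lg; rewrite -(good_lc_one hP); apply: (good_lc_mono hP (good_one hP) mg lg).
Qed.

(* for g > 1 the support of l(g) lies below v(l(g)) < g *)
Lemma lc_supp_below g h : memc P g -> ltc P (onec P) g ->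
  supp (lc P g) h -> memc P h /\ ltc P h g.
Proof.
move=> mg lg hh; have [wg sg] := good_lc_mem hP mg.
have [nv vmax] := ser_val_spec (onec P) wg (ex_intro _ h hh).
have vg := good_val_lt hP mg lg.
have [Mh Mv] := ((sg h hh).1, (sg _ nv).1); split=> //.
case: (sto_total (good_order hP) Mh Mv) => [->//|[lhv|lvh]].
- exact: (sto_trans (good_order hP) Mh Mv mg lhv vg).
- by case: (vmax h hh lvh).
Qed.

Lemma good_sharp : good_plg (sharp P).
Proof.
apply: (@good_of_pushforward k (car P) (ltc P) (memc P)
          (fun h => memc P h /\ ltc P (onec P) h) (memc (sharp P)) (lc P) (@push k P)).
- exact: (good_order hP).
- by move=> x [].
- by move=> f; split.
- exact: (push_is_pushforward (good_lc_inj hP)).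
- exact: lc_reflect.
- by move=> x [mx lx]; split; [apply: (good_lc_mem hP) | apply: lc_pos].
- by move=> x [mx lx] y; apply: lc_supp_below.
Qed.

End SharpExtension.

Section HahnBase.
Variables (k : realFieldType) (d : Order.disp_t) (Γ : orderType d) (σ : Γ -> Γ).

Local Notation ltΓ := (fun x y : Γ => (x < y)%O).

Lemma monom_supp (a x : Γ) : supp (monom k a) x -> x = a.
Proof. by rewrite /supp /monom; case: eqP. Qed.

Lemma monom_at (a : Γ) : monom k a a = 1.
Proof. by rewrite /monom eqxx. Qed.

Lemma monom_inj : injective (@monom k d Γ).
Proof.
move=> a b e; have := f_equal (fun f => f a) e; rewrite /= monom_at /monom.
by case: eqP => // _ /eqP; rewrite oner_eq0.
Qed.

Lemma monom_anti_wo (a : Γ) : anti_wo ltΓ (supp (monom k a)).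
Proof.
move=> A hA [x Ax]; exists x; split=> // y Ay /=.
by rewrite (monom_supp (hA x Ax)) (monom_supp (hA y Ay)) ltxx.
Qed.

Lemma monom_pos (a : Γ) : ser_lt ltΓ (fun _ => 0) (monom k a).
Proof.
exists a; split=> [|h lah]; first by rewrite monom_at ltr01.
by rewrite /monom; case: eqP => // eha; rewrite eha ltxx in lah.
Qed.

Lemma monom_lt (a b : Γ) : ser_lt ltΓ (monom k a) (monom k b) -> (a < b)%O.
Proof.
move=> [p [lp ep]].
have pb : p = b.
  apply: monom_supp => e; move: lp; rewrite e ltNge.
  by rewrite /monom; case: eqP => _; rewrite ?ler01 ?lexx.
subst p; case: (ltgtP a b) => [//|lba|ab].
- have ab : a = b.
    apply: monom_supp; rewrite /supp -(ep a lba) monom_at.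
    by apply/eqP; exact: oner_neq0.
  by rewrite ab ltxx in lba.
- by rewrite ab monom_at ltxx in lp.
Qed.

Hypothesis σ_mono : {mono σ : x y / (x < y)%O}.

Lemma l_sigma_is_pushforward :
  is_pushforward (fun _ => True) (fun γ => monom k (σ γ)) (@l_sigma k d Γ σ).
Proof.
have σ_inj : injective σ by apply/inc_inj/le_mono => x y; rewrite σ_mono.
have j_inj : injective (fun γ => monom k (σ γ)) by move=> x y /monom_inj /σ_inj.
split=> [g γ _|g h]; rewrite /l_sigma; case: excluded_middle_informative.
- by move=> H; case: (constructive_indefinite_description _ H) => δ /= /j_inj ->.
- by move=> []; exists γ.
- by move=> H; case: (constructive_indefinite_description _ H) => δ /= -> ne; exists δ.
- by [].
Qed.

Hypothesis σ_lt : forall γ, (σ γ < γ)%O.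

(* base case: Γ^k with l_σ; here j(γ) = x_{σ(γ)} is supported at σ(γ) < γ *)
Lemma good_hahn_base : good_plg (hahn_base k σ).
Proof.
apply: (@good_of_pushforward k Γ ltΓ (fun _ => True) (fun _ => True)
          (memc (hahn_base k σ)) (fun γ => monom k (σ γ)) (l_sigma σ)).
- exact: order_strict_total.
- by [].
- by move=> f; split=> [|[]].
- exact: l_sigma_is_pushforward.
- by move=> x y _ _ /monom_lt; rewrite σ_mono.
- by move=> x _; split; [apply: monom_anti_wo | apply: monom_pos].
- by move=> x _ y /monom_supp ->.
Qed.

End HahnBase.

Lemma good_tower (k : realFieldType) (P : PLG k) (n : nat) :
  good_plg P -> good_plg (tower P n).
Proof. by move=> hP; elim: n => [|n IH] //=; apply: good_sharp. Qed.

Theorem mainTheorem13 (k : realFieldType) (d : Order.disp_t) (Γ : orderType d)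
  (σ : Γ -> Γ) (log : k -> k)
  (hσ_emb : {mono σ : x y / (x < y)%O})
  (hσ_lt : forall γ, (σ γ < γ)%O)
  (hlog : is_log log)
  (hlog_surj : forall y, exists x, 0 < x /\ log x = y) :
  let G := hahn_base k σ in
  forall (n : nat) (g : car (tower G n)),
    memc (tower G n) g ->
    ltc (tower G n) (onec (tower G n)) g ->
    ltc (tower G n) (ser_val (ltc (tower G n)) (onec (tower G n)) (lc (tower G n) g)) g.
Proof.
move=> G n g mg lg.
exact: (good_val_lt (good_tower n (good_hahn_base k hσ_emb hσ_lt)) mg lg).
Qed.
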